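(* Let $a,b$ be integers with $0<b<a$, let $S=\langle a,a+1,\ldots,a+b\rangle$ with conductor $c$, let $m\ge 2c-1$ and let $t\in\{1,\ldots,a+b-1\}$. Then $$\sharp\mathrm D(m,m+1,\ldots,m+t)=\sharp\mathrm D(m)+\sum_{j=1}^{t}\left\lceil\frac{a+b-j}{b}\right\rceil.$$
   Context: The conductor $c$ of a numerical semigroup $S$ is the least element of $S$ with $c+n\in S$ for all $n\in\mathbb N$. For $x\in S$, $\mathrm D(x)=\{\alpha\in S\mid x-\alpha\in S\}$, and $\mathrm D(x_1,\ldots,x_t)=\mathrm D(x_1)\cup\cdots\cup\mathrm D(x_t)$. *)

From mathcomp Require Import all_boot.
From mathcomp Require Import boolp.
Set Implicit Arguments. Unset Strict Implicit. Unset Printing Implicit Defensive.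

Inductive gen_by (G : nat -> Prop) : nat -> Prop :=
| gen_by0 : gen_by G 0
| gen_byS x g : gen_by G x -> G g -> gen_by G (x + g).

Definition interval_sg (a b : nat) : nat -> Prop :=
  gen_by (fun g => a <= g <= a + b).

Definition is_conductor (S : nat -> Prop) (c : nat) : Prop :=
  [/\ S c, (forall n, S (c + n)) &
      (forall c', S c' -> (forall n, S (c' + n)) -> c <= c')].

Definition inD (S : nat -> Prop) (x alpha : nat) : Prop :=
  [/\ S alpha, alpha <= x & S (x - alpha)].

Definition inD_range (S : nat -> Prop) (m t alpha : nat) : Prop :=
  exists2 j, j <= t & inD S (m + j) alpha.

(* Cardinality of a predicate all of whose elements are <= N. *)
Definition card_upto (N : nat) (P : nat -> Prop) : nat :=
  count (fun n => `[< P n >]) (iota 0 N.+1).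

Definition ceil_div (p q : nat) : nat := (p + q.-1) %/ q.

From mathcomp Require Import all_boot.
From mathcomp Require Import boolp.
From mathcomp Require Import zify.

Set Implicit Arguments.
Unset Strict Implicit.
Unset Printing Implicit Defensive.

(** If S contains 0 and every integer >= c, and m >= 2c-1, then passing from
    D(m,...,m+t) to D(m,...,m+t+1) adds the element m+t+1 and one element m-y
    for every y such that y,...,y+t are gaps of S and y+t+1 lies in S: such a
    y is below c, so m-y >= c lies in S.  For S = <a,...,a+b>, which is the
    union of the intervals [ka, k(a+b)], these runs of t+1 gaps are the last
    t+1 elements of the holes ]k(a+b), (k+1)a[ with kb + t + 1 < a, and there
    are ceil((a-t-1)/b) = ceil((a+b-t-1)/b) - 1 of them. *)

Lemma card_uptoS N (P : nat -> Prop) :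
  card_upto N.+1 P = card_upto N P + `[< P N.+1 >].
Proof. by rewrite /card_upto -addn1 iotaD count_cat /= !addn0. Qed.

Lemma eq_card_upto N (P Q : nat -> Prop) :
  (forall x, x <= N -> P x <-> Q x) -> card_upto N P = card_upto N Q.
Proof.
move=> PQ; apply: eq_in_count => x; rewrite mem_iota ltnS => /PQ.
exact: asbool_equiv_eq.
Qed.

Lemma card_upto_or N (P Q : nat -> Prop) :
  (forall x, P x -> ~ Q x) ->
  card_upto N (fun x => P x \/ Q x) = card_upto N P + card_upto N Q.
Proof.
move=> PnQ; rewrite /card_upto -count_predUI.
have disj : count (predI (fun x => `[< P x >]) (fun x => `[< Q x >])) (iota 0 N.+1) = 0.
  apply/eqP; rewrite -leqn0 leqNgt -has_count; apply/hasPn => x _.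
  by apply/andP => -[/asboolP Px /asboolP Qx]; exact: PnQ Qx.
by rewrite disj addn0; apply: eq_count => x; rewrite /= asbool_or.
Qed.

Lemma card_upto_rev N (P : nat -> Prop) :
  card_upto N (fun x => P (N - x)) = card_upto N P.
Proof.
rewrite /card_upto -!sum1_count -[iota 0 N.+1]/(index_iota 0 N.+1).
rewrite big_nat_rev [LHS]big_nat_cond [RHS]big_nat_cond; apply: eq_bigl => i.
by rewrite add0n subSS ltnS; case: (leqP i N) => //= iN; rewrite subKn.
Qed.

Lemma card_upto_addn N k (P : nat -> Prop) :
  (forall x, N < x <= N + k -> ~ P x) -> card_upto (N + k) P = card_upto N P.
Proof.
elim: k => [|k IHk] nP; first by rewrite addn0.
rewrite addnS card_uptoS IHk => [|x hx]; last by apply: nP; lia.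
by rewrite asboolF ?addn0 //; apply: nP; lia.
Qed.

Lemma card_upto_image m N (P : nat -> Prop) (q : pred nat) (f : nat -> nat) :
  {in q &, injective f} -> (forall k, q k -> k < N) ->
  (forall y, P y -> y <= m) -> (forall y, P y <-> exists2 k, q k & y = f k) ->
  card_upto m P = count q (iota 0 N).
Proof.
move=> f_inj qN Pm Pf.
rewrite /card_upto -!size_filter -(size_map f [seq k <- iota 0 N | q k]).
apply/perm_size/uniq_perm; first exact: filter_uniq (iota_uniq _ _).
  rewrite map_inj_in_uniq ?filter_uniq ?iota_uniq // => k l.
  by rewrite !mem_filter => /andP[qk _] /andP[ql _]; exact: f_inj.
move=> y; rewrite mem_filter mem_iota /=; apply/andP/mapP.
  by case=> /asboolP /Pf [k qk ->] _; exists k; rewrite // mem_filter mem_iota qk qN.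
case=> k; rewrite mem_filter => /andP[qk _] ->.
have Pfk : P (f k) by apply/Pf; exists k.
by split; [exact/asboolP | rewrite ltnS Pm].
Qed.

Lemma count_mul_lt b n N : 0 < b -> n <= N ->
  count (fun k => k * b < n) (iota 0 N) = ceil_div n b.
Proof.
move=> b_gt0 nN; have qN : ceil_div n b <= N.
  by rewrite /ceil_div -ltnS ltn_divLR // mulSn; have := leq_pmulr N b_gt0; lia.
rewrite -size_filter (eq_in_filter (a2 := fun k => k < 0 + ceil_div n b)).
  by rewrite filter_iota_ltn ?size_iota.
by move=> k _; rewrite add0n /ceil_div leq_divRL // mulSn; lia.
Qed.

Lemma ceil_divDB a b j : 0 < b -> j < a + b ->
  ceil_div (a + b - j) b = (ceil_div (a - j) b).+1.
Proof.
move=> b_gt0 jab; rewrite /ceil_div; case: (ltnP j a) => ja.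
  by rewrite (_ : a + b - j + b.-1 = (a - j + b.-1) + 1 * b) ?divnDMl ?addn1 //; lia.
rewrite (_ : a + b - j + b.-1 = (a + b - j).-1 + 1 * b); last lia.
rewrite (_ : a - j + b.-1 = b.-1); last lia.
by rewrite divnDMl // !divn_small //; lia.
Qed.

Section DivisorSets.

Variables (S : nat -> Prop) (c m : nat).
Hypotheses (S0 : S 0) (S_ge_c : forall x, c <= x -> S x) (mc : (2 * c).-1 <= m).

Definition gap_run (t y : nat) : Prop :=
  S (y + t.+1) /\ forall j, j <= t -> ~ S (y + j).

Lemma gap_run_lt_conductor t y : gap_run t y -> y < c.
Proof.
by case=> _ nS; rewrite ltnNge; apply/negP => /S_ge_c; rewrite -[y]addn0; exact: nS.
Qed.

Lemma inD_range_succ t x :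
  inD_range S m t.+1 x <-> inD_range S m t x \/ inD S (m + t.+1) x.
Proof.
split; last by case=> [[j jt Dx] | Dx]; [exists j => //; exact: leqW | exists t.+1].
case=> j; rewrite leq_eqVlt ltnS => /orP[/eqP-> | jt] Dx; [right | left] => //.
by exists j.
Qed.

Lemma inD_range_gt t x : m < x <= m + t -> inD_range S m t x.
Proof.
move=> /andP[mx xt]; exists (x - m); first lia.
by rewrite subnKC ?(ltnW mx) // /inD subnn; split => //; apply: S_ge_c; lia.
Qed.

Lemma inD_new_gap_run t x : x <= m ->
  inD S (m + t.+1) x /\ ~ inD_range S m t x <-> gap_run t (m - x).
Proof.
move=> xm; split.
  case=> -[Sx _ Sd] nD; split; first by rewrite addnBAC.
  by move=> j jt Sj; apply: nD; exists j => //; split; rewrite -?addnBAC //; lia.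
move=> run; have yc := gap_run_lt_conductor run; have Sx : S x by apply: S_ge_c; lia.
case: run => Sy nS; split; first by split; rewrite -?addnBAC //; lia.
by case=> j jt [_ _]; rewrite -addnBAC //; exact: nS.
Qed.

Lemma card_inD_range_succ t :
  card_upto (m + t.+1) (inD_range S m t.+1) =
  card_upto (m + t) (inD_range S m t) + (card_upto m (gap_run t)).+1.
Proof.
pose New x := inD S (m + t.+1) x /\ ~ inD_range S m t x.
rewrite addnS card_uptoS asboolT; last by apply: inD_range_gt; lia.
have -> : card_upto (m + t) (inD_range S m t.+1) =
          card_upto (m + t) (inD_range S m t) + card_upto (m + t) New.
  rewrite -card_upto_or; last by move=> x ? [].
  apply: eq_card_upto => x _; rewrite /New; split => [/inD_range_succ | Dx].
    by case: (pselect (inD_range S m t x)); tauto.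
  by apply/inD_range_succ; tauto.
rewrite -addnA addn1; congr (_ + _.+1).
rewrite card_upto_addn => [|x xmt [_]]; last by apply; exact: inD_range_gt.
by rewrite -[RHS]card_upto_rev; apply: eq_card_upto => x; exact: inD_new_gap_run.
Qed.

Lemma card_inD_range t :
  card_upto (m + t) (inD_range S m t) =
  card_upto m (inD S m) + \sum_(1 <= j < t.+1) (card_upto m (gap_run j.-1)).+1.
Proof.
elim: t => [|t IHt].
  rewrite big_geq // !addn0; apply: eq_card_upto => x _.
  by split=> [[j] | Dx]; [rewrite leqn0 => /eqP-> | exists 0]; rewrite ?addn0.
by rewrite card_inD_range_succ IHt -addnA [in RHS]big_nat_recr.
Qed.

End DivisorSets.

Section IntervalSemigroup.

Variables a b : nat.
Hypothesis a_gt0 : 0 < a.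

Lemma interval_sgP x : interval_sg a b x <-> exists k, k * a <= x <= k * (a + b).
Proof.
split.
  elim=> [|y g _ [k /andP[ka kab]] /andP[ag gab]]; first by exists 0.
  by exists k.+1; rewrite !mulSn; lia.
case=> k; elim: k x => [|k IHk] x.
  by rewrite !mul0n leqn0 => /andP[_ /eqP->]; exact: gen_by0.
rewrite !mulSn mulnDr => /andP[kax xkab].
pose g := minn (a + b) (x - k * a).
rewrite (_ : x = x - g + g); last by rewrite /g; lia.
apply: gen_byS; last by rewrite /g; lia.
by apply: IHk; rewrite /g mulnDr; lia.
Qed.

Lemma gap_run_interval_sgP t y :
  gap_run (interval_sg a b) t y <-> exists2 k, k * b + t.+1 < a & y = k.+1 * a - t.+1.
Proof.
split.
  case=> /interval_sgP [l /andP[la lab]] nS.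
  have nSt : ~ interval_sg a b (y + t) := nS t (leqnn t).
  have yl : y + t.+1 = l * a.
    apply/eqP; rewrite eqn_leq la andbT leqNgt; apply/negP => ylt.
    by apply: nSt; apply/interval_sgP; exists l; lia.
  case: l yl {la lab} => [|k] yl; first lia.
  have below : k * (a + b) < y.
    rewrite ltnNge; apply/negP => yk.
    apply: (nS (minn t (k * (a + b) - y))); first exact: geq_minl.
    by apply/interval_sgP; exists k; rewrite mulSn in yl; lia.
  by exists k; rewrite mulSn mulnDr in yl below *; lia.
case=> k kb ->; split.
  by apply/interval_sgP; exists k.+1; rewrite !mulSn mulnDr; lia.
move=> j jt /interval_sgP [l /andP[la lab]].
case: (leqP l k) => lk.
  by have := leq_mul lk (leqnn (a + b)); rewrite mulSn mulnDr in la lab *; lia.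
by have := leq_mul lk (leqnn a); rewrite mulSn in la lab *; lia.
Qed.

Lemma card_gap_run_interval_sg m c t : 0 < b ->
  (forall x, c <= x -> interval_sg a b x) -> c <= m.+1 ->
  card_upto m (gap_run (interval_sg a b) t) = ceil_div (a - t.+1) b.
Proof.
move=> b_gt0 S_ge_c cm; rewrite -(count_mul_lt b_gt0 (leq_subr _ a)).
apply: (card_upto_image (f := fun k => k.+1 * a - t.+1)).
- move=> k l; rewrite !unfold_in /= !mulSn => kt lt eq_kl; apply/eqP.
  by rewrite -(eqn_pmul2r a_gt0); apply/eqP; lia.
- by move=> k /=; have := leq_pmulr k b_gt0; lia.
- by move=> y /(gap_run_lt_conductor S_ge_c); lia.
move=> y; split=> [/gap_run_interval_sgP [k kt ->] | [k /= kt ->]].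
  by exists k => //=; lia.
by apply/gap_run_interval_sgP; exists k => //; lia.
Qed.

End IntervalSemigroup.

Theorem corollary4p7 (a b c m t : nat) :
  0 < b -> b < a ->
  is_conductor (interval_sg a b) c ->
  (2 * c).-1 <= m ->
  1 <= t <= a + b - 1 ->
  card_upto (m + t) (inD_range (interval_sg a b) m t) =
  card_upto m (inD (interval_sg a b) m)
  + \sum_(1 <= j < t.+1) ceil_div (a + b - j) b.
Proof.
move=> b_gt0 ba [_ Sc _] mc /andP[_ tab].
have a_gt0 : 0 < a by lia.
have S_ge_c x : c <= x -> interval_sg a b x by move=> cx; rewrite -(subnKC cx).
rewrite (card_inD_range (gen_by0 _) S_ge_c mc); congr (_ + _).
apply: eq_big_nat => j /andP[j_gt0 jt].
rewrite (card_gap_run_interval_sg a_gt0 _ b_gt0 S_ge_c); last lia.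
by rewrite prednK // ceil_divDB //; lia.
Qed.
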